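(* For every even $n\ge2$ there exists a unique $w_n\in\mathcal F_n$ with $\tau_{\mathbf m}(w_n)=\{s_{n/2}\}$. Moreover, for $n\ge4$, $w_n=\nu_{n/2}(\rho(w_{n-2}))$.
   Context: $s_i=(i,i+1)$; permutations compose right to left. For even $m$, $\mathcal F_m$ is the set of fixed-point-free involutions of $S_m$ with conjugation action, height $\ell/2$, Bruhat order the weakest partial order with $z\le tzt$ for transpositions $t$ with $\ell(z)\le\ell(tzt)$, and $\tau_{\mathbf m}(z)=\{s_i:s_izs_i\le z\}$. Regard $\mathcal F_{n-2}\subset S_n$; $w_0$ longest element of $S_n$; $\rho(z)=w_0zs_{n-1}w_0$; $Y_1=\rho(\mathcal F_{n-2})$; $\sigma_j=s_j\cdots s_1$; $\nu_j(x)=\sigma_jx\sigma_j^{-1}$ for $x\in Y_1$. *)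

From mathcomp Require Import all_boot all_fingroup.
Set Implicit Arguments. Unset Strict Implicit. Unset Printing Implicit Defensive.
Local Open Scope group_scope.

(* Permutations of {1..n} are modelled by 'S_n = {perm 'I_n} (0-based:
   paper point p corresponds to ordinal p-1). *)

(* Paper composition (right to left): (pc x y) i = x (y i).
   MathComp's product is left-to-right: (x * y) i = y (x i). *)
Definition pc n (x y : 'S_n) : 'S_n := y * x.

(* simple transposition s_i = (i, i+1) (paper, 1-based); identity if out of range *)
Definition sr n (i : nat) : 'S_n :=
  match insub i.-1, insub i with
  | Some a, Some b => tperm a b
  | _, _ => 1
  end.

Definition len n (z : 'S_n) : nat :=
  #|[set p : 'I_n * 'I_n | (p.1 < p.2) && (z p.2 < z p.1)]|.

Definition fpfb n (z : 'S_n) : bool := (z * z == 1) && [forall i, z i != i].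
Definition Ffpf n : {set 'S_n} := [set z | fpfb z].

(* generating relation of the Bruhat order on F_n: z <= t z t for a
   transposition t with len z <= len (t z t) *)
Definition bstep n : rel 'S_n := fun z y =>
  [&& fpfb z,
      [exists a : 'I_n, exists b : 'I_n,
          (a != b) && (y == pc (tperm a b) (pc z (tperm a b)))]
    & len z <= len y].

Definition bruhat_le n (z y : 'S_n) : bool := connect (@bstep n) z y.

Definition simples n : {set 'S_n} := [set sr n i | i : 'I_n & 0 < i].

Definition tau n (z : 'S_n) : {set 'S_n} :=
  [set s in simples n | bruhat_le (pc s (pc z s)) z].

Definition w0 n : 'S_n := perm (@rev_ord_inj n).

(* F_k regarded inside S_(k+2): fix the last two points *)
Definition ext2 k (z : 'S_k) : 'S_(k.+2) :=
  lift_perm ord_max ord_max (lift_perm ord_max ord_max z).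

Definition rho k (z : 'S_k) : 'S_(k.+2) :=
  pc (w0 _) (pc (ext2 z) (pc (sr (k.+2) (k.+1)) (w0 _))).

Fixpoint sigma n (j : nat) : 'S_n :=
  match j with
  | 0 => 1
  | j'.+1 => pc (sr n j) (sigma n j')
  end.

Definition nu n (j : nat) (x : 'S_n) : 'S_n :=
  pc (sigma n j) (pc x (sigma n j)^-1).

(* For a fixed-point-free involution z and adjacent positions a, b = a + 1,
   the conjugate t z t by t = (a b) is either z itself (when z swaps a and b)
   or has length len z + 2 or len z - 2; hence t lies in tau(z) exactly when
   z has a descent at b.  So tau(z) = {s_(n/2)} says that z is increasing on
   both halves [0, n/2) and [n/2, n).  Being an involution without fixed
   points, z must then send the lower half into the upper one, and an
   increasing map between two intervals of the same size is a translation: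
   z = w_n : i |-> i + n/2 mod n.  The recursion for w_n is then a pointwise
   computation. *)

From mathcomp Require Import all_boot all_fingroup zify.
Set Implicit Arguments. Unset Strict Implicit. Unset Printing Implicit Defensive.
Local Open Scope group_scope.

Section Increasing.
Variables (f : nat -> nat) (m : nat).
Hypothesis f_incr : forall k, k.+1 < m -> f k < f k.+1.

Lemma incr_addn i d : i + d < m -> f i + d <= f (i + d).
Proof.
elim: d => [|d IH] lt_m; first by rewrite !addn0.
rewrite addnS in lt_m *.
by have := IH (ltnW lt_m); have := f_incr lt_m; lia.
Qed.

Lemma incr_ltn i j : i < j < m -> f i < f j.
Proof.
case/andP=> ij jm; have := @incr_addn i (j - i).
by rewrite subnKC ?(ltnW ij) //; lia.
Qed.

Lemma incr_interval lo : (forall k, k < m -> lo <= f k < lo + m) ->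
  forall k, k < m -> f k = k + lo.
Proof.
move=> range k km.
have := @incr_addn 0 k; have := @incr_addn k (m.-1 - k).
have := range 0; have := range m.-1; have := range k; rewrite add0n subnKC; lia.
Qed.

End Increasing.

Lemma pcE n (x y : 'S_n) k : pc x y k = x (y k).
Proof. by rewrite /pc permM. Qed.

Lemma pcV n (x y : 'S_n) : (pc x y)^-1 = pc y^-1 x^-1.
Proof. by rewrite /pc invMg. Qed.

Definition natperm n (s : 'S_n) (k : nat) : nat :=
  if insub k is Some i then val (s i) else k.

Lemma natpermE n (s : 'S_n) (i : 'I_n) : natperm s i = s i.
Proof. by rewrite /natperm valK. Qed.

Lemma natperm_out n (s : 'S_n) k : n <= k -> natperm s k = k.
Proof. by move=> nk; rewrite /natperm insubF // ltnNge nk. Qed.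

Lemma natperm_lt n (s : 'S_n) k : k < n -> natperm s k < n.
Proof. by move=> kn; rewrite -[k]/(val (Ordinal kn)) natpermE. Qed.

Lemma natperm_pc n (x y : 'S_n) k : natperm (pc x y) k = natperm x (natperm y k).
Proof.
have [kn|nk] := ltnP k n; last by rewrite !natperm_out.
by rewrite -[k]/(val (Ordinal kn)) !natpermE pcE.
Qed.

Lemma natperm_inj n (x y : 'S_n) : (forall k, k < n -> natperm x k = natperm y k) -> x = y.
Proof. by move=> e; apply/permP => i; apply: val_inj; rewrite /= -!natpermE e. Qed.

Lemma natperm1 n t : natperm (1 : 'S_n) t = t.
Proof.
have [tn|nt] := ltnP t n; last exact: natperm_out.
by rewrite -[t]/(val (Ordinal tn)) natpermE perm1.
Qed.

(* Splits the innermost conditionals first, so that every case hypothesis is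
   an arithmetic fact usable by lia. *)
Ltac case_ifs :=
  repeat match goal with
  | |- context [if ?c then _ else _] =>
      lazymatch c with context [if _ then _ else _] => fail | _ => case: (boolP c) end
  end.

Lemma val_tperm n (a b u : 'I_n) :
  val (tperm a b u) = if u == a then val b else if u == b then val a else val u.
Proof.
by case: tpermP => [->|->|/eqP/negbTE-> /eqP/negbTE->]; rewrite ?eqxx //; case: eqP => [->|].
Qed.

Lemma ltn_tperm_adj n (a b u v : 'I_n) : val b = (val a).+1 -> u != v ->
  (tperm a b u < tperm a b v) =
   if (u == a) && (v == b) then false
   else if (u == b) && (v == a) then true else u < v.
Proof.
rewrite !val_tperm -!val_eqE; case: u v a b => [u ?] [v ?] [a ?] [b ?] /= hb huv.
by repeat case: eqP => /= ?; lia.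
Qed.

Definition inversions n (z : 'S_n) : {set 'I_n * 'I_n} :=
  [set p : 'I_n * 'I_n | (p.1 < p.2) && (z p.2 < z p.1)].

Lemma lenE n (z : 'S_n) : len z = #|inversions z|.
Proof. by []. Qed.

Lemma lenV n (z : 'S_n) : len z^-1 = len z.
Proof.
rewrite !lenE -(card_preimset (inversions z) (f := fun p => (z^-1 p.2, z^-1 p.1))).
  by apply: eq_card => -[p q]; rewrite !inE /= !permKV andbC.
by move=> [p q] [p' q'] [/perm_inj -> /perm_inj ->].
Qed.

Lemma len_tpermL n (a b : 'I_n) (y : 'S_n) : val b = (val a).+1 ->
  y^-1 a < y^-1 b -> len (pc (tperm a b) y) = (len y).+1.
Proof.
move=> hb hlt; rewrite !lenE.
have ltab : a < b by move: hb => /= ->.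
suff -> : inversions (pc (tperm a b) y) = (y^-1 a, y^-1 b) |: inversions y.
  by rewrite cardsU1 inE /= !permKV hlt /= ltnNge ltnW.
apply/setP => -[p q]; rewrite !inE /= !pcE xpair_eqE -!(canF_eq (permK y)).
have [->|pq] := eqVneq p q.
  by rewrite ltnn /= orbF; case: eqVneq => // ->; rewrite -val_eqE ltn_eqF.
have yV u : y^-1 (y u) = u by rewrite permK.
have ab : a != b by rewrite -val_eqE ltn_eqF.
rewrite (@ltn_tperm_adj _ a b (y q) (y p) hb); last by rewrite (inj_eq perm_inj) eq_sym.
rewrite [(y p == a) && _]andbC.
case: ifP => [/andP[/eqP qa /eqP pb] | _].
  move: hlt; rewrite -qa -pb !yV qa pb (negbTE ab) ltab /= andbF andbT.
  by move=> /ltnW; rewrite leqNgt => /negbTE.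
case: ifP => [/andP[/eqP qb /eqP pa] | _] //.
by move: hlt; rewrite -qb -pa !yV => ->.
Qed.

Lemma len_tpermR n (a b : 'I_n) (z : 'S_n) : val b = (val a).+1 ->
  z a < z b -> len (pc z (tperm a b)) = (len z).+1.
Proof. by move=> hb hlt; rewrite -lenV pcV tpermV len_tpermL ?lenV ?invgK. Qed.

Section FixedPointFreeInvolution.
Variables (n : nat) (z : 'S_n).
Hypothesis fpf_z : fpfb z.

Lemma fpf_invol k : z (z k) = k.
Proof. by case/andP: fpf_z => /eqP h _; rewrite -permM h perm1. Qed.

Lemma fpf_neq k : z k != k.
Proof. by case/andP: fpf_z => _ /forallP. Qed.

Lemma fpfV : z^-1 = z.
Proof. by apply/permP => k; apply: (@perm_inj _ z); rewrite permKV fpf_invol. Qed.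

Lemma natperm_fpf_invol k : natperm z (natperm z k) = k.
Proof.
have [kn|nk] := ltnP k n; last by rewrite !natperm_out.
by rewrite -[k]/(val (Ordinal kn)) !natpermE fpf_invol.
Qed.

Lemma natperm_fpf_neq k : k < n -> natperm z k != k.
Proof. by move=> kn; rewrite -[k]/(val (Ordinal kn)) natpermE val_eqE fpf_neq. Qed.

End FixedPointFreeInvolution.

Definition tconj n (a b : 'I_n) (z : 'S_n) : 'S_n := pc (tperm a b) (pc z (tperm a b)).

Lemma tconjE n (a b : 'I_n) (z : 'S_n) k : tconj a b z k = tperm a b (z (tperm a b k)).
Proof. by rewrite /tconj !pcE. Qed.

Lemma tconjK n (a b : 'I_n) : involutive (tconj a b).
Proof. by move=> z; apply/permP => k; rewrite !tconjE !tpermK. Qed.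

Lemma fpf_tconj n (a b : 'I_n) (z : 'S_n) : fpfb z -> fpfb (tconj a b z).
Proof.
move=> fpf_z; apply/andP; split.
  by apply/eqP/permP => k; rewrite permM perm1 !tconjE tpermK fpf_invol // tpermK.
apply/forallP => k; rewrite tconjE (canF_eq (tpermK a b)).
exact: fpf_neq.
Qed.

Lemma tconj_id n (a b : 'I_n) (z : 'S_n) : z a = b -> z b = a -> tconj a b z = z.
Proof.
move=> za zb; apply/permP => k; rewrite tconjE.
case: (tpermP a b k) => [->|->|ka kb]; first by rewrite zb za tpermL.
  by rewrite za zb tpermR.
have [zka|zka] := eqVneq (z k) a; first by case: kb; apply: (@perm_inj _ z); rewrite zka zb.
have [zkb|zkb] := eqVneq (z k) b; first by case: ka; apply: (@perm_inj _ z); rewrite zkb za.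
by rewrite tpermD // eq_sym.
Qed.

Lemma len_tconj n (a b : 'I_n) (z : 'S_n) : fpfb z -> val b = (val a).+1 ->
  z a < z b -> len (tconj a b z) = (len z).+2.
Proof.
move=> fpf_z hb hlt.
have ltab : a < b by move: hb => /= ->.
rewrite /tconj len_tpermL // ?len_tpermR // pcV tpermV (fpfV fpf_z) !pcE.
rewrite (@ltn_tperm_adj _ a b (z a) (z b) hb); last first.
  by rewrite (inj_eq perm_inj) -val_eqE ltn_eqF.
rewrite (negbTE (fpf_neq fpf_z a)) /=.
by case: ifP => // /andP[/eqP za /eqP zb]; move: hlt; rewrite za zb ltnNge ltnW.
Qed.

Lemma bruhat_le_len n (x y : 'S_n) : bruhat_le x y -> len x <= len y.
Proof.
case/connectP => p; elim: p x => [|c p IH] x /=; first by move=> _ ->.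
by case/andP => /and3P [_ _ hl] hp hy; apply: leq_trans hl (IH _ hp hy).
Qed.

Lemma bruhat_le_tconj_desc n (a b : 'I_n) (z : 'S_n) : fpfb z -> val b = (val a).+1 ->
  z b < z a -> bruhat_le (tconj a b z) z.
Proof.
move=> fpf_z hb hgt; have ltab : a < b by move: hb => /= ->.
(* Unless z swaps a and b, a single length-increasing step leads from y up to z. *)
have [za|za] := eqVneq (z a) b.
  have zb : z b = a by rewrite -za fpf_invol.
  by rewrite tconj_id //; apply: connect0.
set y := tconj a b z.
have ylt : y a < y b.
  rewrite /y !tconjE tpermL tpermR.
  rewrite (@ltn_tperm_adj _ a b (z b) (z a) hb); last first.
    by rewrite (inj_eq perm_inj) -val_eqE gtn_eqF.
  by rewrite (negbTE (fpf_neq fpf_z b)) /= (negbTE za) andbF.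
apply: connect1; apply/and3P; split; first exact: fpf_tconj.
  apply/existsP; exists a; apply/existsP; exists b.
  have ab : a != b by rewrite -val_eqE ltn_eqF.
  by rewrite ab; apply/eqP; rewrite -[LHS](tconjK a b).
by rewrite -(tconjK a b z) -/y len_tconj ?fpf_tconj // -addn2 leq_addr.
Qed.

Lemma bruhat_le_tconj n (a b : 'I_n) (z : 'S_n) : fpfb z -> val b = (val a).+1 ->
  bruhat_le (tconj a b z) z = (z b < z a).
Proof.
move=> fpf_z hb; have ltab : a < b by move: hb => /= ->.
case: (ltngtP (z a) (z b)) => [hlt|hgt|/val_inj/perm_inj eab].
- by apply/negP => /bruhat_le_len; rewrite len_tconj //; lia.
- exact: bruhat_le_tconj_desc.
- by move: ltab; rewrite eab ltnn.
Qed.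

Lemma sr_adj n (a b : 'I_n) : val b = (val a).+1 -> sr n b = tperm a b.
Proof. by move=> hb; rewrite /sr [in insub _]hb /= !valK. Qed.

Lemma ord_has_pred n (i : 'I_n) : 0 < i -> exists a : 'I_n, val i = (val a).+1.
Proof. by move=> i0; exists (Ordinal (leq_ltn_trans (leq_pred i) (ltn_ord i))); rewrite /= prednK. Qed.

Lemma tperm_adj_eq n (a b a' b' : 'I_n) : val b = (val a).+1 -> val b' = (val a').+1 ->
  (tperm a b == tperm a' b') = (b == b').
Proof.
move=> hb hb'; apply/eqP/eqP => [e|e]; last first.
  by rewrite -e; congr tperm; apply/val_inj/succn_inj; rewrite -hb -hb' e.
apply: val_inj; have := val_tperm a' b' a; rewrite -e tpermL -!val_eqE /=.
by move: hb hb' => /= hb hb'; repeat case: eqP => /= ?; lia.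
Qed.

Lemma tperm_adj_in_tau n (z : 'S_n) (a b : 'I_n) : fpfb z -> val b = (val a).+1 ->
  (tperm a b \in tau z) = (z b < z a).
Proof.
move=> fpf_z hb; rewrite inE -[pc _ (pc z _)]/(tconj a b z) bruhat_le_tconj // andbC.
case: (z b < z a) => //=; apply/imsetP; exists b; last by rewrite (sr_adj hb).
by rewrite inE hb.
Qed.

Lemma tau_eq_set1 n (z : 'S_n) (m : nat) : fpfb z -> 0 < m < n ->
  tau z = [set sr n m] <->
  (forall a b : 'I_n, val b = (val a).+1 -> (z b < z a) = (val b == m)).
Proof.
move=> fpf_z /andP[m0 mn].
have [a0 hb0] := ord_has_pred (i := Ordinal mn) m0.
have srm : sr n m = tperm a0 (Ordinal mn) by rewrite -sr_adj.
split => [tau_z a b hb | hdesc].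
  by rewrite -tperm_adj_in_tau // tau_z inE srm tperm_adj_eq.
apply/setP => s; rewrite [RHS]inE srm.
have [/imsetP [i hi ->]|hs] := boolP (s \in simples n).
  rewrite inE in hi; have [a hia] := ord_has_pred hi.
  by rewrite (sr_adj hia) tperm_adj_in_tau // hdesc // tperm_adj_eq.
rewrite inE (negbTE hs); apply/esym/negbTE; apply: contra hs => /eqP ->.
by rewrite -srm; apply/imsetP; exists (Ordinal mn); rewrite ?inE.
Qed.

Section OneDescent.
Variables (n m : nat) (z : 'S_n).
Hypotheses (n_double : n = m + m) (fpf_z : fpfb z).
Hypothesis desc_z : forall a b : 'I_n, val b = (val a).+1 -> (z b < z a) = (val b == m).

Let f := natperm z.

Lemma one_descent_incr k : k.+1 < m -> f k < f k.+1.
Proof.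
move=> km; have kn : k.+1 < n by lia.
pose a := Ordinal (ltnW kn); pose b := Ordinal kn.
have := desc_z (a := a) (b := b) erefl; rewrite /= (ltn_eqF km) => zba.
rewrite /f (natpermE z a : natperm z k = z a) (natpermE z b : natperm z k.+1 = z b).
rewrite ltn_neqAle leqNgt zba andbT val_eqE (inj_eq perm_inj) -val_eqE /=.
by rewrite neq_ltn ltnSn.
Qed.

Lemma one_descent_low k : k < m -> f k = k + m.
Proof.
have f_ltn := incr_ltn one_descent_incr.
move: k; apply: (incr_interval one_descent_incr) => k km; have kn : k < n by lia.
have fk_lt : f k < n := natperm_lt z kn.
have fk_neq : f k != k := natperm_fpf_neq fpf_z kn.
have ffk : f (f k) = k := natperm_fpf_invol fpf_z k.
(* If f k < m too, monotonicity on [0, m) contradicts f (f k) = k. *)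
rewrite -n_double fk_lt andbT leqNgt; apply/negP => fkm.
case: (ltngtP k (f k)) => [lt|gt|eq]; last by rewrite -eq eqxx in fk_neq.
- by have := f_ltn k (f k); rewrite lt fkm ffk => /(_ isT); lia.
- by have := f_ltn (f k) k; rewrite gt km ffk => /(_ isT); lia.
Qed.

Lemma natperm_one_descent k : natperm z k = if k < m then k + m else if k < n then k - m else k.
Proof.
case: ifP => [|km]; first exact: one_descent_low.
case: ifP => [kn|nk]; last by rewrite natperm_out // leqNgt nk.
have lo : f (k - m) = k by rewrite one_descent_low; lia.
by rewrite -{1}lo /f natperm_fpf_invol.
Qed.

End OneDescent.

Lemma half_rotation_subproof n (k : 'I_n) : (k + n./2) %% n < n.
Proof. by rewrite ltn_pmod // (leq_ltn_trans _ (ltn_ord k)). Qed.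

Definition half_rotation_fun n (k : 'I_n) : 'I_n := Ordinal (half_rotation_subproof k).

Lemma half_rotation_fun_inj n : injective (@half_rotation_fun n).
Proof.
move=> i j /(congr1 val) /= /eqP; rewrite eqn_modDr !modn_small // => /eqP.
exact: val_inj.
Qed.

Definition half_rotation n : 'S_n := perm (@half_rotation_fun_inj n).

Lemma natperm_half_rotation n k : ~~ odd n ->
  natperm (half_rotation n) k = if k < n./2 then k + n./2 else if k < n then k - n./2 else k.
Proof.
move=> ev; have [kn|nk] := ltnP k n; last first.
  by rewrite natperm_out //; case_ifs; lia.
rewrite -[k]/(val (Ordinal kn)) natpermE permE /=.
case: ifP => kh; first by rewrite modn_small //; lia.
have -> : k + n./2 = k - n./2 + n by lia.
by rewrite modnDr modn_small //; lia.
Qed.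

Lemma fpf_half_rotation n : 0 < n -> ~~ odd n -> fpfb (half_rotation n).
Proof.
move=> n0 ev; apply/andP; split.
  apply/eqP/permP => k; apply: val_inj; rewrite permM perm1 /= -!natpermE.
  by have := ltn_ord k; rewrite !natperm_half_rotation //; case_ifs; lia.
apply/forallP => k; rewrite -val_eqE /= -natpermE natperm_half_rotation //.
by have := ltn_ord k; case_ifs; lia.
Qed.

Lemma descents_half_rotation n (a b : 'I_n) : ~~ odd n -> val b = (val a).+1 ->
  (half_rotation n b < half_rotation n a) = (val b == n./2).
Proof.
move=> ev hb; rewrite -!natpermE !natperm_half_rotation // hb /=.
have := ltn_ord b; rewrite hb /=; case_ifs; lia.
Qed.

Lemma tau_eq_set1_half_rotation n (z : 'S_n) : 2 <= n -> ~~ odd n -> fpfb z ->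
  tau z = [set sr n n./2] <-> z = half_rotation n.
Proof.
move=> n2 ev fpf_z; have n_double : n = n./2 + n./2 by lia.
have half_range : 0 < n./2 < n by apply/andP; split; lia.
rewrite (tau_eq_set1 fpf_z half_range); split => [desc | ->].
  apply: natperm_inj => k _.
  by rewrite natperm_half_rotation // (natperm_one_descent n_double fpf_z desc).
by move=> a b; apply: descents_half_rotation.
Qed.

Lemma exists_unique_fpf_tau n : 2 <= n -> ~~ odd n ->
  exists! w : 'S_n, w \in Ffpf n /\ tau w = [set sr n n./2].
Proof.
move=> n2 ev; have fpf_w := @fpf_half_rotation n (ltnW n2) ev.
exists (half_rotation n); split.
  by split; [rewrite inE | apply/(tau_eq_set1_half_rotation n2 ev fpf_w)].
move=> w [+ tau_w]; rewrite inE => fpf_w'.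
by apply/esym/(tau_eq_set1_half_rotation n2 ev fpf_w').
Qed.

Lemma natperm_sr n i t : 0 < i < n ->
  natperm (sr n i) t = if t == i.-1 then i else if t == i then i.-1 else t.
Proof.
case/andP=> i0 iN; have [a ha] := ord_has_pred (i := Ordinal iN) i0.
have [tn|nt] := ltnP t n; last by rewrite natperm_out //; case_ifs; lia.
rewrite -[i]/(val (Ordinal iN)) (sr_adj ha) -[t]/(val (Ordinal tn)) natpermE val_tperm.
by move: ha => /= ha; rewrite -!val_eqE /= ha.
Qed.

Lemma natperm_sigma n j t : j < n ->
  natperm (sigma n j) t = if t == 0 then j else if t <= j then t.-1 else t.
Proof.
elim: j => [|j IH] jn /=; first by rewrite natperm1; case_ifs; lia.
rewrite natperm_pc natperm_sr ?IH; [by case_ifs; lia | exact: ltnW | by rewrite jn].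
Qed.

Lemma natperm_w0 n t : natperm (w0 n) t = if t < n then n - t.+1 else t.
Proof.
have [tn|nt] := ltnP t n; last exact: natperm_out.
by rewrite -[t]/(val (Ordinal tn)) natpermE permE.
Qed.

Lemma natperm_ext2 k (z : 'S_k) t : natperm (ext2 z) t = natperm z t.
Proof.
have [tk|kt] := ltnP t k.
  have -> : t = lift ord_max (lift ord_max (Ordinal tk)) :> nat by rewrite !lift_max.
  by rewrite natpermE /ext2 !lift_perm_lift !lift_max natpermE.
rewrite (natperm_out z kt); have [tk2|] := ltnP t k.+2; last exact: natperm_out.
have [->|->] : t = (ord_max : 'I_k.+2) \/ t = (lift ord_max ord_max : 'I_k.+2).
  by rewrite lift_max /=; lia.
- by rewrite natpermE /ext2 lift_perm_id.
- by rewrite natpermE /ext2 lift_perm_lift lift_perm_id.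
Qed.

Lemma natperm_rho k (z : 'S_k) t : t < k.+2 ->
  natperm (rho z) t = if t < 2 then 1 - t else k.+1 - natperm z (k.+1 - t).
Proof.
move=> tk; rewrite /rho !natperm_pc natperm_ext2 !natperm_w0 tk subSS natperm_sr //=.
have zk : natperm z k = k := natperm_out z (leqnn k).
have zk1 : natperm z k.+1 = k.+1 := natperm_out z (leqnSn k).
have zlt : 2 <= t -> natperm z (k.+1 - t) < k by move=> t2; apply: natperm_lt; lia.
by case_ifs; lia.
Qed.

Lemma pc_eq_conj n (w s x : 'S_n) : pc w s = pc s x -> w = pc s (pc x s^-1).
Proof. by rewrite /pc => e; rewrite -mulgA -e mulKg. Qed.

Lemma nu_rho_half_rotation k : ~~ odd k ->
  nu (k.+2)./2 (rho (half_rotation k)) = half_rotation k.+2.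
Proof.
move=> ev; have ev2 : ~~ odd k.+2 by lia.
have M_lt : (k.+2)./2 < k.+2 by lia.
rewrite /nu; set s := sigma _ _.
apply/esym/pc_eq_conj/natperm_inj => t tk.
rewrite [LHS]natperm_pc [RHS]natperm_pc /s !(natperm_sigma _ M_lt) natperm_rho //.
rewrite !natperm_half_rotation //.
by case_ifs; lia.
Qed.

Theorem proposition6p5 :
  (forall n : nat, 2 <= n -> ~~ odd n ->
     exists! w : 'S_n, w \in Ffpf n /\ tau w = [set sr n n./2]) /\
  (forall k : nat, 2 <= k -> ~~ odd k ->
     forall (w : 'S_(k.+2)) (w' : 'S_k),
       w \in Ffpf (k.+2) -> tau w = [set sr (k.+2) (k.+2)./2] ->
       w' \in Ffpf k -> tau w' = [set sr k k./2] ->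
       w = nu (k.+2)./2 (rho w')).
Proof.
split; first exact: exists_unique_fpf_tau.
move=> k k2 ev w w'; rewrite !inE => fpf_w tau_w fpf_w' tau_w'.
have [k2_2 ev_2] : 2 <= k.+2 /\ ~~ odd k.+2 by split; lia.
move/(tau_eq_set1_half_rotation k2_2 ev_2 fpf_w): tau_w => ->.
move/(tau_eq_set1_half_rotation k2 ev fpf_w'): tau_w' => ->.
by rewrite nu_rho_half_rotation.
Qed.
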